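(* For every $n\ge 0$, the coefficient $\ell_{n,1}$ equals the number of intervals of the Tamari lattice $\mathrm{Tam}_n$, i.e. the number of pairs $(A,B)$ of formulas of size $n$ with frontier $p_0,\dots,p_n$ such that $A\le B$ in the Tamari order. Equivalently, $L_1(z)=\sum_n\ell_{n,1}z^n$ is the ordinary generating function of the number of intervals of $\mathrm{Tam}_n$.
   Context: Formulas are built from atoms by a binary product: every formula is an atom or $A\bullet B$. A context is a finite (possibly empty) list of formulas; commas denote concatenation. Size: $|p|=0$ for atoms, $|A\bullet B|=1+|A|+|B|$. Frontier: $\mathrm{fr}(p)=p$, $\mathrm{fr}(A\bullet B)=\mathrm{fr}(A),\mathrm{fr}(B)$. The Tamari order $\le$ on formulas is the least preorder with $(A\bullet B)\bullet C\le A\bullet(B\bullet C)$ and $A_1\le A_2$, $B_1\le B_2$ implying $A_1\bullet B_1\le A_2\bullet B_2$; $\mathrm{Tam}_n$ is the poset of formulas of size $n$ over a fixed frontier $p_0,\dots,p_n$ of distinct atoms (equivalently, binary trees with $n$ internal nodes under right rotation). A context is irreducible if its leftmost formula is not a product. A focused derivation is a finite derivation tree with no undischarged premises using only: ($\bullet L$) from $A,B,\Delta\vdash C$ infer $A\bullet B,\Delta\vdash C$; ($\bullet R^{foc}$) from $\Gamma\vdash A$ and $\Delta\vdash B$ infer $\Gamma,\Delta\vdash A\bullet B$ with $\Gamma$ irreducible; ($id^{atm}$) $p\vdash p$ for atoms $p$. Let $\ell_{n,k}$ be the number of focused derivations of sequents $\Gamma\vdash B$ with $|B|=n$, $\mathrm{fr}(B)=p_0,\dots,p_n$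 and $\Gamma$ a context of length $k$; $L(z,x)=\sum_{n,k}\ell_{n,k}z^nx^k$ and $L_1(z)$ is the coefficient of $x^1$ in $L$. *)

From Stdlib Require Import List Arith.
Import ListNotations.

Inductive formula : Type :=
| Atom : nat -> formula
| Prod : formula -> formula -> formula.

(* Contexts: finite lists of formulas; comma = list concatenation. *)
Definition context := list formula.

Fixpoint fsize (A : formula) : nat :=
  match A with
  | Atom _ => 0
  | Prod A B => S (fsize A + fsize B)
  end.

Fixpoint frontier (A : formula) : list nat :=
  match A with
  | Atom p => [p]
  | Prod A B => frontier A ++ frontier B
  end.

Inductive tam_le : formula -> formula -> Prop :=
| tam_refl A : tam_le A A
| tam_trans A B C : tam_le A B -> tam_le B C -> tam_le A C
| tam_assoc A B C : tam_le (Prod (Prod A B) C) (Prod A (Prod B C))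
| tam_prod A1 A2 B1 B2 :
    tam_le A1 A2 -> tam_le B1 B2 -> tam_le (Prod A1 B1) (Prod A2 B2).

Definition irreducible (G : context) : Prop :=
  match G with
  | Prod _ _ :: _ => False
  | _ => True
  end.

(* A valid tree is exactly a focused
   derivation (a tree of rule instances); the rule instance at each node is
   determined by its conclusion and premises. *)
Inductive dtree : Type :=
| Did : nat -> dtree
| DprodL : context -> formula -> dtree -> dtree
| DprodR : context -> formula -> dtree -> dtree -> dtree.

Definition concl (d : dtree) : context * formula :=
  match d with
  | Did p => ([Atom p], Atom p)
  | DprodL G C _ => (G, C)
  | DprodR G C _ _ => (G, C)
  end.

Fixpoint focused (d : dtree) : Prop :=
  match d with
  | Did _ => True
  | DprodL G C d1 =>
      (exists A B D, G = Prod A B :: D /\ concl d1 = (A :: B :: D, C))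
      /\ focused d1
  | DprodR G C d1 d2 =>
      (exists G1 G2 A B, G = G1 ++ G2 /\ C = Prod A B /\
         concl d1 = (G1, A) /\ concl d2 = (G2, B) /\ irreducible G1)
      /\ focused d1 /\ focused d2
  end.

Definition card_is {T : Type} (P : T -> Prop) (N : nat) : Prop :=
  exists l : list T, NoDup l /\ (forall x, P x <-> In x l) /\ length l = N.

Definition counted_deriv (n k : nat) (d : dtree) : Prop :=
  focused d /\ fsize (snd (concl d)) = n /\
  frontier (snd (concl d)) = seq 0 (S n) /\ length (fst (concl d)) = k.

Definition tamari_interval (n : nat) (AB : formula * formula) : Prop :=
  fsize (fst AB) = n /\ frontier (fst AB) = seq 0 (S n) /\
  fsize (snd AB) = n /\ frontier (snd AB) = seq 0 (S n) /\
  tam_le (fst AB) (snd AB).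

(* A focused derivation is determined by its end sequent: rule (•L) applies
   exactly when the leftmost formula is a product, which the irreducibility
   side condition of (•R) forbids, and the splitting of the context in (•R) is
   fixed because the left part must have the frontier of the left factor.
   Hence l_{n,1} counts the derivable sequents A |- B with fr(B) = p_0..p_n.
   Such a sequent is derivable iff A <= B: derivations preserve frontiers and
   are sound when a context is read as the left-nested product of its
   formulas, which lies below any other bracketing; conversely the identity,
   the unfocused (•R) rule and cut are admissible, and these derive every
   generator of the Tamari order. *)

From Stdlib Require Import List Arith Lia Classical.
Import ListNotations.

Inductive derivable : context -> formula -> Prop :=
| der_id p : derivable [Atom p] (Atom p)
| der_prodL A B D C : derivable (A :: B :: D) C -> derivable (Prod A B :: D) C
| der_prodR G1 G2 A B :
    irreducible G1 -> derivable G1 A -> derivable G2 B ->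
    derivable (G1 ++ G2) (Prod A B).

Lemma not_derivable_nil C : ~ derivable [] C.
Proof.
  intros H; remember [] as G eqn:E.
  induction H as [| |G1 G2 A B _ _ IH1]; try discriminate.
  apply app_eq_nil in E as [E _]; exact (IH1 E).
Qed.

Lemma derivable_prodR G A D B :
  derivable G A -> derivable D B -> derivable (G ++ D) (Prod A B).
Proof.
  intros HG; revert D B.
  induction HG as [p|A1 A2 G C _ IH|G1 G2 A1 A2 Hirr H1 _ H2 _]; intros D B HD.
  - exact (der_prodR [Atom p] D (Atom p) B I (der_id p) HD).
  - apply der_prodL, IH, HD.
  - assert (Hirr12 : irreducible (G1 ++ G2)).
    { destruct G1 as [|A G1]; [contradiction (not_derivable_nil _ H1) | exact Hirr]. }
    apply der_prodR; [exact Hirr12 | apply der_prodR; assumption | exact HD].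
Qed.

Lemma derivable_refl A : derivable [A] A.
Proof.
  induction A as [p|A1 IH1 A2 IH2]; [apply der_id|].
  apply der_prodL, (derivable_prodR [A1] A1 [A2] A2 IH1 IH2).
Qed.

Section CutStep.

Variables (B : formula) (G : context).
Hypothesis derivable_G : derivable G B.
Hypothesis cut_principal : forall X Y D C,
  B = Prod X Y -> derivable (X :: Y :: D) C -> derivable (G ++ D) C.

Lemma derivable_cut_step D C : derivable D C ->
  forall D1 D2, D = D1 ++ B :: D2 -> derivable (D1 ++ G ++ D2) C.
Proof.
  induction 1 as [p|X Y D C H IH|G1 G2 X Y Hirr H1 IH1 H2 IH2]; intros D1 D2 E.
  - destruct D1 as [|? [|]]; try discriminate.
    injection E as <- <-. rewrite app_nil_r. exact derivable_G.
  - destruct D1 as [|Z D1]; injection E as E1 E2; subst.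
    + exact (cut_principal X Y D2 C eq_refl H).
    + apply der_prodL, (IH (X :: Y :: D1)), eq_refl.
  - apply app_eq_app in E as [l [[-> E] | [-> E]]].
    + destruct l as [|Z l].
      * rewrite app_nil_r in H1, Hirr.
        exact (der_prodR _ _ _ _ Hirr H1 (IH2 [] D2 (eq_sym E))).
      * injection E as <- ->.
        rewrite !app_assoc. apply derivable_prodR; [rewrite <- app_assoc|]; auto.
    + rewrite <- app_assoc. apply der_prodR; auto.
Qed.

End CutStep.

Section CutPrincipal.

Variables X Y : formula.
Hypothesis cut_X : forall G, derivable G X ->
  forall D1 D2 C, derivable (D1 ++ X :: D2) C -> derivable (D1 ++ G ++ D2) C.
Hypothesis cut_Y : forall G, derivable G Y ->
  forall D1 D2 C, derivable (D1 ++ Y :: D2) C -> derivable (D1 ++ G ++ D2) C.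

Lemma derivable_cut_principal G Z : derivable G Z -> Z = Prod X Y ->
  forall D C, derivable (X :: Y :: D) C -> derivable (G ++ D) C.
Proof.
  induction 1 as [p|A B D C _ IH|G1 G2 A B _ H1 _ H2 _]; intros E D0 C0 H.
  - discriminate.
  - apply der_prodL, IH; assumption.
  - injection E as -> ->.
    rewrite <- app_assoc.
    apply (cut_Y G2 H2 G1 D0 C0), (cut_X G1 H1 [] (Y :: D0) C0), H.
Qed.

End CutPrincipal.

Lemma derivable_cut B G : derivable G B ->
  forall D1 D2 C, derivable (D1 ++ B :: D2) C -> derivable (D1 ++ G ++ D2) C.
Proof.
  revert G; induction B as [p|X IHX Y IHY]; intros G HG D1 D2 C H;
    refine (derivable_cut_step _ G HG _ _ C H D1 D2 eq_refl).
  - discriminate.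
  - intros X' Y' D C' E; injection E as <- <-.
    exact (derivable_cut_principal X Y IHX IHY G _ HG eq_refl D C').
Qed.

Lemma tam_le_derivable A B : tam_le A B -> derivable [A] B.
Proof.
  induction 1 as [A|A B C _ IH1 _ IH2|A B C|A1 A2 B1 B2 _ IH1 _ IH2].
  - apply derivable_refl.
  - exact (derivable_cut B [A] IH1 [] [] C IH2).
  - apply der_prodL, der_prodL.
    apply (derivable_prodR [A] A [B; C]), (derivable_prodR [B] B [C] C);
      apply derivable_refl.
  - apply der_prodL, (derivable_prodR [A1] A2 [B1] B2 IH1 IH2).
Qed.

Definition ctx_formula (G : context) : formula :=
  match G with
  | [] => Atom 0
  | A :: G' => fold_left Prod G' A
  end.

Lemma fold_left_Prod_mono G A B :
  tam_le A B -> tam_le (fold_left Prod G A) (fold_left Prod G B).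
Proof.
  revert A B; induction G; intros A B H; simpl; auto.
  apply IHG, tam_prod; [exact H | apply tam_refl].
Qed.

Lemma fold_left_Prod_assoc G X Y :
  tam_le (fold_left Prod G (Prod X Y)) (Prod X (fold_left Prod G Y)).
Proof.
  revert X Y; induction G as [|Z G IH]; intros X Y; simpl; [apply tam_refl|].
  eapply tam_trans; [apply fold_left_Prod_mono, tam_assoc | apply IH].
Qed.

Lemma derivable_tam_le G C : derivable G C -> tam_le (ctx_formula G) C.
Proof.
  induction 1 as [p|A B D C _ IH|G1 G2 A B _ H1 IH1 H2 IH2]; auto using tam_refl.
  destruct G1 as [|X G1]; [contradiction (not_derivable_nil _ H1)|].
  destruct G2 as [|Y G2]; [contradiction (not_derivable_nil _ H2)|].
  simpl in *; rewrite fold_left_app; simpl.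
  eapply tam_trans; [apply fold_left_Prod_assoc | apply tam_prod; assumption].
Qed.

Lemma derivable_singleton_iff A B : derivable [A] B <-> tam_le A B.
Proof. split; [apply derivable_tam_le | apply tam_le_derivable]. Qed.

Definition ctx_frontier (G : context) : list nat := flat_map frontier G.

Lemma derivable_frontier G C : derivable G C -> ctx_frontier G = frontier C.
Proof.
  unfold ctx_frontier; induction 1; simpl in *; auto.
  - rewrite <- app_assoc; assumption.
  - rewrite flat_map_app; congruence.
Qed.

Lemma length_frontier A : length (frontier A) = S (fsize A).
Proof. induction A; simpl; auto. rewrite length_app; lia. Qed.

Lemma ctx_frontier_eq_nil G : ctx_frontier G = [] -> G = [].
Proof.
  destruct G as [|A G]; auto; unfold ctx_frontier; simpl; intros H.
  pose proof (length_frontier A) as L.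
  destruct (frontier A); [discriminate | inversion H].
Qed.

Lemma app_inv_ctx_frontier G1 G2 H1 H2 :
  G1 ++ G2 = H1 ++ H2 -> ctx_frontier G1 = ctx_frontier H1 -> G1 = H1 /\ G2 = H2.
Proof.
  intros E F.
  assert (nil_of_app_r : forall l K, ctx_frontier (K ++ l) = ctx_frontier K -> l = []).
  { intros l K E'. apply ctx_frontier_eq_nil, (app_inv_head (ctx_frontier K)).
    unfold ctx_frontier in *; rewrite <- flat_map_app, app_nil_r; exact E'. }
  apply app_eq_app in E as [l [[-> ->] | [-> ->]]].
  - rewrite (nil_of_app_r l H1 F), !app_nil_r; auto.
  - rewrite (nil_of_app_r l G1 (eq_sym F)), !app_nil_r; auto.
Qed.

Lemma focused_derivable d : focused d -> derivable (fst (concl d)) (snd (concl d)).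
Proof.
  induction d as [p|G C d IH|G C d1 IH1 d2 IH2]; simpl.
  - intros _; apply der_id.
  - intros [[A [B [D [-> E]]]] Hd].
    specialize (IH Hd); rewrite E in IH; apply der_prodL, IH.
  - intros [[G1 [G2 [A [B [-> [-> [E1 [E2 Hirr]]]]]]]] [Hd1 Hd2]].
    specialize (IH1 Hd1); specialize (IH2 Hd2); rewrite E1 in IH1; rewrite E2 in IH2.
    apply der_prodR; assumption.
Qed.

Lemma derivable_focused G C : derivable G C -> exists d, focused d /\ concl d = (G, C).
Proof.
  induction 1 as [p|A B D C _ [d [Hd E]]|G1 G2 A B Hirr _ [d1 [Hd1 E1]] _ [d2 [Hd2 E2]]].
  - exists (Did p); split; simpl; auto.
  - exists (DprodL (Prod A B :: D) C d); simpl; split; auto.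
    split; [exists A, B, D|]; auto.
  - exists (DprodR (G1 ++ G2) (Prod A B) d1 d2); simpl; split; auto.
    split; [exists G1, G2, A, B|]; auto.
Qed.

Lemma focused_prodR_head_not_prod G C d1 d2 A B D :
  focused (DprodR G C d1 d2) -> G <> Prod A B :: D.
Proof.
  intros [[G1 [G2 [A' [B' [-> [_ [E1 [_ Hirr]]]]]]]] [Hd1 _]] E.
  pose proof (focused_derivable d1 Hd1) as K; rewrite E1 in K.
  destruct G1 as [|X G1]; [contradiction (not_derivable_nil _ K)|].
  injection E as -> _; contradiction.
Qed.

Lemma focused_unique d1 d2 : focused d1 -> focused d2 -> concl d1 = concl d2 -> d1 = d2.
Proof.
  revert d2.
  induction d1 as [p|G C d1 IH|G C d1 IH1 d1' IH2];
    intros [q|G' C' d2|G' C' d2 d2'] H1 H2 E; simpl in E.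
  - congruence.
  - destruct H2 as [[A [B [D [E' _]]]] _]; congruence.
  - destruct H2 as [[G1 [G2 [A [B [_ [E' _]]]]]] _]; congruence.
  - destruct H1 as [[A [B [D [E' _]]]] _]; congruence.
  - destruct H1 as [[A [B [D [-> E1]]]] Hd1], H2 as [[A' [B' [D' [E' E2]]]] Hd2].
    injection E as <- <-; injection E' as <- <- <-.
    f_equal; apply IH; congruence.
  - destruct H1 as [[A [B [D [-> _]]]] _].
    injection E as E _; destruct (focused_prodR_head_not_prod _ _ _ _ A B D H2 (eq_sym E)).
  - destruct H1 as [[G1 [G2 [A [B [_ [E' _]]]]]] _]; congruence.
  - destruct H2 as [[A [B [D [-> _]]]] _].
    injection E as E _; destruct (focused_prodR_head_not_prod _ _ _ _ A B D H1 E).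
  - destruct H1 as [[G1 [G2 [A [B [-> [-> [E1 [E2 _]]]]]]]] [Hd1 Hd1']].
    destruct H2 as [[K1 [K2 [A' [B' [-> [-> [E1' [E2' _]]]]]]]] [Hd2 Hd2']].
    injection E as E <- <-.
    pose proof (derivable_frontier _ _ (focused_derivable _ Hd1)) as F1.
    pose proof (derivable_frontier _ _ (focused_derivable _ Hd2)) as F2.
    rewrite E1 in F1; rewrite E1' in F2.
    destruct (app_inv_ctx_frontier _ _ _ _ E (eq_trans F1 (eq_sym F2))) as [<- <-].
    f_equal; [apply IH1 | apply IH2]; congruence.
Qed.

Lemma NoDup_filter_classical {T} (P : T -> Prop) (l : list T) :
  exists l', NoDup l' /\ forall x, In x l' <-> In x l /\ P x.
Proof.
  induction l as [|a l [l' [Hnd Hin]]].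
  - exists []; split; [constructor | simpl; tauto].
  - destruct (classic (P a /\ ~ In a l')) as [[Ha Hnew] | Hold].
    + exists (a :: l'); split; [constructor; assumption|].
      intros x; simpl; rewrite Hin; split; [intuition congruence|].
      intros [[<- | Hx] Px]; auto.
    + exists l'; split; [assumption|].
      intros x; simpl; rewrite Hin; split; [tauto|].
      intros [[<- | Hx] Px]; [|auto].
      apply Hin, NNPP; intro Hout; apply Hold; auto.
Qed.

Lemma card_is_of_incl {T} (P : T -> Prop) (l : list T) :
  (forall x, P x -> In x l) -> exists N, card_is P N.
Proof.
  intros Hl; destruct (NoDup_filter_classical P l) as [l' [Hnd Hin]].
  exists (length l'), l'; repeat split; auto.
  - intros Px; apply Hin; auto.
  - intros Hx; apply Hin, Hx.
Qed.

Lemma map_preimage {S T} (Q : T -> Prop) (f : T -> S) (l : list S) :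
  (forall x, In x l -> exists y, Q y /\ f y = x) ->
  exists ys, map f ys = l /\ Forall Q ys.
Proof.
  induction l as [|x l IH]; intros Hl; [exists []; auto|].
  destruct (Hl x (or_introl eq_refl)) as [y [Qy <-]].
  destruct IH as [ys [<- Hys]]; [intros; apply Hl; right; assumption|].
  exists (y :: ys); auto.
Qed.

Lemma card_is_bij {S T} (P : S -> Prop) (Q : T -> Prop) (f : T -> S) N :
  card_is P N ->
  (forall y, Q y -> P (f y)) ->
  (forall x, P x -> exists y, Q y /\ f y = x) ->
  (forall y1 y2, Q y1 -> Q y2 -> f y1 = f y2 -> y1 = y2) ->
  card_is Q N.
Proof.
  intros [l [Hnd [Hin <-]]] Hdom Hsurj Hinj.
  destruct (map_preimage Q f l) as [ys [<- Hys]]; [intros x Hx; apply Hsurj, Hin, Hx|].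
  rewrite Forall_forall in Hys.
  exists ys; split; [exact (NoDup_map_inv f ys Hnd) | split; [|symmetry; apply length_map]].
  intros y; split; [|apply Hys].
  intros Qy.
  destruct (proj1 (in_map_iff f ys (f y)) (proj1 (Hin (f y)) (Hdom y Qy))) as [y' [E Hy']].
  rewrite (Hinj y y' Qy (Hys y' Hy') (eq_sym E)); exact Hy'.
Qed.

Fixpoint formulas_over (fuel : nat) (s : list nat) : list formula :=
  match fuel with
  | 0 => []
  | S fuel =>
      map Atom s ++
      flat_map (fun k => map (fun AB => Prod (fst AB) (snd AB))
                  (list_prod (formulas_over fuel (firstn k s))
                             (formulas_over fuel (skipn k s))))
               (seq 0 (S (length s)))
  end.

Lemma In_formulas_over A fuel : fsize A < fuel -> In A (formulas_over fuel (frontier A)).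
Proof.
  revert fuel; induction A as [p|A1 IH1 A2 IH2]; intros [|fuel] H; simpl in H; try lia.
  - left; reflexivity.
  - cbn [formulas_over frontier]; apply in_or_app; right; apply in_flat_map.
    exists (length (frontier A1)); split.
    + apply in_seq; rewrite length_app; lia.
    + rewrite firstn_app, skipn_app, Nat.sub_diag, firstn_all, skipn_all.
      rewrite firstn_O, skipn_O, app_nil_r; simpl.
      apply in_map_iff; exists (A1, A2); split; [reflexivity|].
      apply in_prod; [apply IH1 | apply IH2]; lia.
Qed.

Lemma tamari_interval_finite n : exists N, card_is (tamari_interval n) N.
Proof.
  set (Fs := formulas_over (S n) (seq 0 (S n))).
  apply (card_is_of_incl _ (list_prod Fs Fs)).
  intros [A B] [sA [fA [sB [fB _]]]]; cbn [fst snd] in *.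
  apply in_prod; unfold Fs; [rewrite <- fA | rewrite <- fB]; apply In_formulas_over; lia.
Qed.

Definition end_sequent_pair (d : dtree) : formula * formula :=
  (hd (Atom 0) (fst (concl d)), snd (concl d)).

Lemma counted_deriv_interval n d :
  counted_deriv n 1 d -> tamari_interval n (end_sequent_pair d).
Proof.
  intros [Hd [sC [fC lenG]]].
  pose proof (focused_derivable d Hd) as K.
  unfold end_sequent_pair; destruct (concl d) as [[|A [|]] C]; try discriminate.
  simpl in *.
  pose proof (derivable_frontier _ _ K) as F; unfold ctx_frontier in F; simpl in F.
  rewrite app_nil_r in F.
  assert (sA : fsize A = fsize C).
  { apply Nat.succ_inj; rewrite <- !length_frontier, F; reflexivity. }
  repeat split; simpl; try congruence.
  apply derivable_singleton_iff, K.
Qed.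

Lemma interval_counted_deriv n A B :
  tamari_interval n (A, B) -> exists d, counted_deriv n 1 d /\ end_sequent_pair d = (A, B).
Proof.
  intros [_ [_ [sB [fB HAB]]]]; simpl in *.
  destruct (derivable_focused [A] B (proj2 (derivable_singleton_iff A B) HAB)) as [d [Hd E]].
  exists d; unfold counted_deriv, end_sequent_pair; rewrite E; simpl; auto.
Qed.

Lemma end_sequent_pair_inj n d1 d2 : counted_deriv n 1 d1 -> counted_deriv n 1 d2 ->
  end_sequent_pair d1 = end_sequent_pair d2 -> d1 = d2.
Proof.
  intros [Hd1 [_ [_ len1]]] [Hd2 [_ [_ len2]]] E.
  apply focused_unique; auto.
  unfold end_sequent_pair in E.
  destruct (concl d1) as [[|A1 [|]] C1], (concl d2) as [[|A2 [|]] C2];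
    try discriminate; simpl in *; congruence.
Qed.

Theorem proposition3p1 (n : nat) :
  exists N : nat, card_is (counted_deriv n 1) N /\ card_is (tamari_interval n) N.
Proof.
  destruct (tamari_interval_finite n) as [N HN].
  exists N; split; [|exact HN].
  apply (card_is_bij (tamari_interval n) _ end_sequent_pair N HN).
  - apply counted_deriv_interval.
  - intros [A B]; apply interval_counted_deriv.
  - apply end_sequent_pair_inj.
Qed.
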